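(* Let $g(x)=\sin(x)^2$ and for positive integers $m,n$ let $\tilde{G}(m,n)=\frac{1}{\pi}\int_{-\pi/2}^{\pi/2}\prod_{i=0}^{n-1} g(x+mi\pi/n)\,dx$. Then $\tilde{G}(1,n)=\frac{2}{4^n}$ for every positive integer $n$, and $\tilde G(m,n)\ge\tilde G(1,n)$ for all positive integers $m,n$. *)

From Stdlib Require Import Reals Lra Lia.
From Coquelicot Require Import Coquelicot.
Open Scope R_scope.

Definition g (x : R) : R := (sin x) ^ 2.

Fixpoint prod_upto (n : nat) (f : nat -> R) : R :=
  match n with
  | O => 1
  | S k => prod_upto k f * f k
  end.

Definition Gt (m n : nat) : R :=
  / PI * RInt (fun x => prod_upto n (fun i => g (x + INR m * INR i * PI / INR n)))
              (- (PI / 2)) (PI / 2).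

(* Since 4 sin(y)^2 = |e^{-2ix} - e^{2i(y - x)}|^2, taking y = x + m j pi / n turns the
   integrand into 4^{-n} |prod_j (w - zeta^{m j})|^2 with w = e^{-2ix} and zeta = e^{2 pi i / n}
   a primitive n-th root of unity.  Since zeta^m is a primitive (n/d)-th root of unity,
   d = gcd(m, n), this product is (w^{n/d} - 1)^d, so the integrand equals
   (4 sin((n/d) x)^2)^d / 4^n.  For d = 1 it is (2 - 2 cos(2 n x)) / 4^n, whose integral is
   2 pi / 4^n.  In general, with t = 1 - cos(2 (n/d) x), Bernoulli's inequality
   (2t)^d >= 2^d (1 + d (t - 1)) bounds the integrand below by a function with integral
   2^d pi / 4^n >= 2 pi / 4^n. *)
Set Warnings "-notation-overridden,-ambiguous-paths".
From Stdlib Require Import Reals Lra.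
From Coquelicot Require Import Coquelicot.
From HB Require Import structures.
From mathcomp Require Import all_boot all_algebra.
From mathcomp Require Import Rstruct complex.
Import GRing.Theory Num.Theory.
Open Scope R_scope.

Section RootsOfUnity.
Local Open Scope ring_scope.

Lemma prod_sub_prim_root_powers (F : fieldType) (n m : nat) (z w : F) :
  n.-primitive_root z ->
  \prod_(i < n) (w - z ^+ (m * i)) = (w ^+ (n %/ gcdn m n) - 1) ^+ gcdn m n.
Proof.
move=> prim_z; set d := gcdn m n; set n' := (n %/ d)%N.
have prim_zm : n'.-primitive_root (z ^+ m) by exact: exp_prim_root.
have prod_roots : \prod_(i < n') (w - (z ^+ m) ^+ i) = w ^+ n' - 1.
  have roots_eq := congr1 (horner^~ w) (factor_Xn_sub_1 prim_zm).
  rewrite /= horner_prod !hornerE in roots_eq.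
  by rewrite -roots_eq big_mkord; apply: eq_bigr => i _; rewrite !hornerE.
have prod_blocks k :
    \prod_(0 <= i < n' * k) (w - (z ^+ m) ^+ i) = (w ^+ n' - 1) ^+ k.
  elim: k => [|k IH]; first by rewrite muln0 big_geq // expr0.
  rewrite mulnSr (@big_cat_nat _ _ _ (n' * k)%N) /= ?IH ?leq_addr //.
  rewrite -{1}(add0n (n' * k)%N) big_addn addKn exprSr -prod_roots big_mkord.
  congr (_ * _); apply: eq_bigr => i _.
  by rewrite exprD exprM (prim_expr_order prim_zm) expr1n mulr1.
have n_eq : n = (n' * d)%N by rewrite /n' divnK // dvdn_gcdr.
by rewrite -prod_blocks -n_eq big_mkord; apply: eq_bigr => i _; rewrite exprM.
Qed.

End RootsOfUnity.

Section UnitCircle.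
Local Open Scope ring_scope.
Local Open Scope complex_scope.

Definition expi (t : R) : R[i] := (cos t) +i* (sin t).

Lemma expiD a b : expi a * expi b = expi (a + b).
Proof.
rewrite /expi; apply/eqP; rewrite eq_complex /=; apply/andP; split; apply/eqP.
  by rewrite cosD.
by rewrite sinD addrC.
Qed.

Lemma expi0 : expi 0 = 1.
Proof. by rewrite /expi cos_0 sin_0. Qed.

Lemma expiX t k : expi t ^+ k = expi (INR k * t).
Proof.
elim: k => [|k IH]; first by rewrite expr0 Rmult_0_l expi0.
by rewrite exprS IH expiD; congr expi; rewrite S_INR; ring.
Qed.

Definition sqnormc (c : R[i]) : R :=
  let: a +i* b := c in Rplus (Rmult a a) (Rmult b b).

Lemma sqnormcM a b : sqnormc (a * b) = sqnormc a * sqnormc b.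
Proof.
case: a => a1 a2; case: b => b1 b2; rewrite /sqnormc /=.
by rewrite -!RmultE -!RminusE -!RplusE; ring.
Qed.

Lemma sqnormc1 : sqnormc 1 = 1.
Proof. by rewrite /sqnormc /= Rmult_1_l Rmult_0_l Rplus_0_r. Qed.

Lemma sqnormcX c k : sqnormc (c ^+ k) = sqnormc c ^+ k.
Proof. by elim: k => [|k IH]; rewrite ?expr0 ?sqnormc1 // !exprS sqnormcM IH. Qed.

Lemma sqnormc_prod n (F : 'I_n -> R[i]) :
  sqnormc (\prod_(i < n) F i) = \prod_(i < n) sqnormc (F i).
Proof. exact: (big_morph sqnormc sqnormcM sqnormc1). Qed.

Lemma sqnormc_expiB a b : sqnormc (expi a - expi b) = Rmult 4 (Rsqr (sin ((a - b) / 2))).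
Proof.
rewrite /sqnormc /expi /= -!RminusE form2 form4.
by have := sin2_cos2 ((a + b) / 2); rewrite /Rsqr; nra.
Qed.

End UnitCircle.

Lemma expi_prim_root n : (0 < n)%N -> primitive_root_of_unity n (expi (2 * PI / INR n)).
Proof.
move=> n_gt0; apply/andP; split => //; apply/forallP => i; rewrite unity_rootE expiX.
have nR : 0 < INR n by apply: lt_0_INR; apply/ltP.
have [i_eq|i_neq] := eqVneq i.+1 n.
  rewrite i_eq eqb_id; apply/eqP.
  have -> : INR n * (2 * PI / INR n) = 2 * PI by field; lra.
  by rewrite /expi cos_2PI sin_2PI.
rewrite eqbF_neg; apply/negP => /eqP/(congr1 (@complex.Re _)) /=.
have iR : 0 < INR i.+1 < INR n.
  by split; [apply: lt_0_INR | apply: lt_INR]; apply/ltP; rewrite // ltn_neqAle i_neq ltn_ord.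
set t := PI * INR i.+1 / INR n.
have -> : INR i.+1 * (2 * PI / INR n) = 2 * t by rewrite /t; field; lra.
have t_pos : 0 < t.
  by apply: Rdiv_lt_0_compat; [apply: Rmult_lt_0_compat; [exact: PI_RGT_0|lra]|lra].
have t_lt_PI : t < PI by apply/Rlt_div_l; [lra | have := PI_RGT_0; nra].
have sin_pos := sin_gt_0 t t_pos t_lt_PI.
rewrite cos_2a_sin => cos_eq; change (1 - 2 * sin t * sin t = 1) in cos_eq; nra.
Qed.

Lemma prod_uptoE n f : prod_upto n f = (\prod_(i < n) f i)%R.
Proof. by elim: n => [|n IH] /=; rewrite ?big_ord0 // big_ord_recr /= IH. Qed.

Lemma g_cos2 y : g y = (1 - cos (2 * y)) / 2.
Proof. by rewrite /g cos_2a_sin; field. Qed.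

Lemma four_g_sqnormc n m x i : (0 < n)%N ->
  4 * g (x + INR m * INR i * PI / INR n) =
  sqnormc (expi (-2 * x) - expi (2 * PI / INR n) ^+ (m * i))%R.
Proof.
move=> n_gt0; have nR : INR n <> 0 by apply: not_0_INR => n0; rewrite n0 in n_gt0.
rewrite expiX sqnormc_expiB mult_INR.
have -> : (-2 * x - INR m * INR i * (2 * PI / INR n)) / 2 =
          - (x + INR m * INR i * PI / INR n) by field.
by rewrite sin_neg /g /Rsqr; ring.
Qed.

Lemma prod_g_shifts n m x : (0 < n)%N ->
  prod_upto n (fun i => g (x + INR m * INR i * PI / INR n)) =
  (4 * g (INR (n %/ gcdn m n) * x)) ^ gcdn m n / 4 ^ n.
Proof.
move=> n_gt0; set d := gcdn m n; set n' := (n %/ d)%N.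
suff scaled : 4 ^ n * prod_upto n (fun i => g (x + INR m * INR i * PI / INR n)) =
              (4 * g (INR n' * x)) ^ d.
  by rewrite -scaled; field; apply: pow_nonzero; lra.
have pow_as_prod (a : R) : (a ^+ n = \prod_(i < n) a)%R by rewrite prodr_const card_ord.
rewrite prod_uptoE RpowE pow_as_prod -big_split /=.
under eq_bigr do rewrite four_g_sqnormc //.
rewrite -sqnormc_prod prod_sub_prim_root_powers ?expi_prim_root //.
have base : sqnormc (expi (INR n' * (-2 * x)) - expi 0)%R = 4 * g (INR n' * x).
  rewrite sqnormc_expiB /g /Rsqr.
  have -> : (INR n' * (-2 * x) - 0) / 2 = - (INR n' * x) by field.
  by rewrite sin_neg; ring.
by rewrite sqnormcX -expi0 expiX base RpowE.
Qed.

Lemma sin_INR_mult_PI k : sin (INR k * PI) = 0.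
Proof.
elim: k => [|k IH]; first by rewrite Rmult_0_l sin_0.
by rewrite S_INR Rmult_plus_distr_r Rmult_1_l neg_sin IH; lra.
Qed.

Lemma RInt_scal_one_sub_cos a c k : (0 < k)%N ->
  RInt (fun x => a * (1 - c * cos (2 * INR k * x))) (- (PI / 2)) (PI / 2) = a * PI.
Proof.
move=> k_gt0; have kR : 0 < INR k by apply: lt_0_INR; apply/ltP.
set F := fun x => a * (x - c * sin (2 * INR k * x) / (2 * INR k)).
have F_end : 2 * INR k * (PI / 2) = INR k * PI by field.
have F_start : 2 * INR k * (- (PI / 2)) = - (INR k * PI) by rewrite -Ropp_mult_distr_r F_end.
have -> : a * PI = F (PI / 2) - F (- (PI / 2)).
  by rewrite /F F_end F_start sin_neg sin_INR_mult_PI; field; lra.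
apply: is_RInt_unique; apply: (is_RInt_derive F) => x _.
  by rewrite /F; auto_derive => //; field; lra.
by apply: ex_derive_continuous; auto_derive.
Qed.

Lemma pow_ge_bernoulli t d : 0 <= t -> 1 + INR d * (t - 1) <= t ^ d.
Proof.
move=> t_ge0; elim: d => [|d IH]; first by rewrite /=; lra.
rewrite S_INR /=; have d_ge0 := pos_INR d.
have : t * (1 + INR d * (t - 1)) <= t * t ^ d by apply: Rmult_le_compat_l.
have : 0 <= INR d * ((t - 1) * (t - 1)) by apply: Rmult_le_pos => //; apply: Rle_0_sqr.
nra.
Qed.

Lemma Gt_1 n : (0 < n)%N -> Gt 1 n = 2 / 4 ^ n.
Proof.
move=> n_gt0; have pow_pos : 0 < 4 ^ n by apply: pow_lt; lra.
have PI_pos := PI_RGT_0.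
rewrite /Gt (RInt_ext _ (fun x => 2 / 4 ^ n * (1 - 1 * cos (2 * INR n * x)))).
  rewrite RInt_scal_one_sub_cos //.
  by change (/ PI * (2 / 4 ^ n * PI) = 2 / 4 ^ n); field; lra.
move=> x _; rewrite prod_g_shifts // gcd1n divn1 pow_1 g_cos2.
change (4 * ((1 - cos (2 * (INR n * x))) / 2) / 4 ^ n =
        2 / 4 ^ n * (1 - 1 * cos (2 * INR n * x))).
by rewrite Rmult_assoc; field; lra.
Qed.

Lemma Gt_ge_pow2 m n : (0 < m)%N -> (0 < n)%N -> Gt m n >= 2 ^ gcdn m n / 4 ^ n.
Proof.
move=> m_gt0 n_gt0; set d := gcdn m n; set n' := (n %/ d)%N.
have n'_gt0 : (0 < n')%N by rewrite /n' divn_gt0 ?gcdn_gt0 ?m_gt0 // dvdn_leq // dvdn_gcdr.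
have pow_pos : 0 < 4 ^ n by apply: pow_lt; lra.
have PI_pos := PI_RGT_0.
set f := fun x => (4 * g (INR n' * x)) ^ d / 4 ^ n.
set L := fun x => 2 ^ d / 4 ^ n * (1 - INR d * cos (2 * INR n' * x)).
have f_ge_L : forall x, L x <= f x.
  move=> x; rewrite /L /f.
  set t := 1 - cos (2 * (INR n' * x)).
  have t_ge0 : 0 <= t by rewrite /t; have := COS_bound (2 * (INR n' * x)); lra.
  have -> : 4 * g (INR n' * x) = 2 * t by rewrite g_cos2 /t; field.
  have -> : 1 - INR d * cos (2 * INR n' * x) = 1 + INR d * (t - 1) by rewrite /t Rmult_assoc; ring.
  have -> : (2 * t) ^ d / 4 ^ n = 2 ^ d / 4 ^ n * t ^ d by rewrite Rpow_mult_distr; field; lra.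
  apply: Rmult_le_compat_l; last exact: pow_ge_bernoulli.
  by apply/Rlt_le/Rdiv_lt_0_compat => //; apply: pow_lt; lra.
have RInt_le_f : 2 ^ d / 4 ^ n * PI <= RInt f (- (PI / 2)) (PI / 2).
  rewrite -(@RInt_scal_one_sub_cos _ (INR d) n' n'_gt0); apply: RInt_le => [||| x _]; first lra.
  - by apply: ex_RInt_continuous => z _; apply: ex_derive_continuous; rewrite /L; auto_derive.
  - by apply: ex_RInt_continuous => z _; apply: ex_derive_continuous; rewrite /f /g; auto_derive.
  exact: f_ge_L.
have -> : Gt m n = / PI * RInt f (- (PI / 2)) (PI / 2).
  by rewrite /Gt; congr (_ * _); apply: RInt_ext => x _; rewrite prod_g_shifts.
apply: Rle_ge; have -> : 2 ^ d / 4 ^ n = / PI * (2 ^ d / 4 ^ n * PI) by field; lra.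
by apply: Rmult_le_compat_l => //; left; apply: Rinv_0_lt_compat.
Qed.

Theorem corollary5p2 :
  (forall n : nat, Peano.lt 0 n -> Gt 1 n = 2 / 4 ^ n) /\
  (forall m n : nat, Peano.lt 0 m -> Peano.lt 0 n -> Gt m n >= Gt 1 n).
Proof.
split; first by move=> n /ltP; apply: Gt_1.
move=> m n /ltP m_gt0 /ltP n_gt0.
have d_gt0 : (0 < gcdn m n)%N by rewrite gcdn_gt0 m_gt0.
have two_le_pow : 2 <= 2 ^ gcdn m n.
  rewrite -(prednK d_gt0) /=; have := pow_R1_Rle 2 (gcdn m n).-1; lra.
have := Gt_ge_pow2 m n m_gt0 n_gt0; rewrite Gt_1 //.
have : 0 < / 4 ^ n by apply/Rinv_0_lt_compat/pow_lt; lra.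
rewrite /Rdiv; nra.
Qed.
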